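(* Let $\mathcal{A}$ be a unital algebra, $\tau:\mathcal{A}\to\mathbb{C}$ a unital linear functional and $\tau':\mathcal{A}\to\mathbb{C}$ a linear functional with $\tau'(1)=0$, and let $\mathcal{A}_1,\mathcal{A}_2$ be two unital subalgebras which are infinitesimally free with respect to $(\tau,\tau')$. Let $\mathcal{I}$ be an ideal of $\mathcal{A}$ with $\mathcal{I}\subset \ker(\tau)$, and set $\mathcal{I}_1=\mathcal{I}\cap \mathcal{A}_1$, $\mathcal{I}_2=\mathcal{I}\cap \mathcal{A}_2$. Then, whenever $a_n\in \mathcal{A}_{i_n},\ldots,a_1\in \mathcal{A}_{i_1}$, $v\in \mathcal{I}_h$, $b_1\in \mathcal{A}_{j_1},\ldots,b_m\in \mathcal{A}_{j_m}$ are such that any two consecutive indices in the list $i_n,\ldots,i_1,h,j_1,\ldots,j_m \in\{1,2\}$ are different and $\tau(a_n)=\cdots=\tau(a_1)=0=\tau(b_1)=\cdots=\tau(b_m)$, we have $$\tau'(a_n\cdots a_1vb_1\cdots b_m)=\tau(a_n\cdots a_1\,\tau'(v)\,b_1\cdots b_m).$$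
   Context: Infinitesimal freeness w.r.t. $(\tau,\tau')$: whenever $a_j\in\mathcal{A}_{i_j}$ ($1\le j\le n$) with consecutive indices different and $\tau(a_j)=0$ for all $j$, one has $\tau(a_1\cdots a_n)=0$ and $\tau'(a_1\cdots a_n)=\sum_{j=1}^n\tau(a_1\cdots a_{j-1}\tau'(a_j)a_{j+1}\cdots a_n)$. *)

(* Scalars: complex numbers C = R[i] for R : realType
   (any realType is the real line, so R[i] is the field of complex numbers). *)
From HB Require Import structures.
From mathcomp Require Import all_boot all_order all_algebra.
From mathcomp Require Import reals.
From mathcomp Require Export complex.
Set Implicit Arguments. Unset Strict Implicit. Unset Printing Implicit Defensive.
Import Order.TTheory GRing.Theory Num.Theory.
Local Open Scope ring_scope.

Section Defs.
Variables (C : fieldType) (A : algType C).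

Definition is_ideal (I : {pred A}) : Prop :=
  [/\ 0 \in I, {in I &, forall x y, x + y \in I}
    & forall a x, x \in I -> a * x \in I /\ x * a \in I].

Definition lprod (s : seq (bool * A)) : A := \prod_(p <- s) p.2.

Definition alternating (s : seq bool) : bool := sorted (fun x y => x != y) s.

(* Infinitesimal freeness of the family Af (indexed by bool = {1,2})
   w.r.t. (tau, tau'): for every nonempty word a_1 ... a_n with a_j in Af i_j,
   consecutive indices different and tau(a_j) = 0, one has tau(a_1...a_n) = 0
   and tau'(a_1...a_n) = sum_j tau(a_1...a_{j-1} tau'(a_j) a_{j+1} ... a_n). *)
Definition inf_free (tau tau' : A -> C) (Af : bool -> {pred A}) : Prop :=
  forall s : seq (bool * A),
    s != [::] ->
    alternating (map fst s) ->
    (forall p, p \in s -> p.2 \in Af p.1) ->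
    (forall p, p \in s -> tau p.2 = 0) ->
    tau (lprod s) = 0 /\
    tau' (lprod s) =
      \sum_(j < size s)
        tau (lprod (take j s) * (tau' (nth (true, 0) s j).2)%:A
             * lprod (drop j.+1 s)).
End Defs.

(** Write the word as [s = a_n ... a_1 v b_1 ... b_m].  It is alternating and
    centred, so infinitesimal freeness expands [tau'(s)] as a sum over the
    letters of [s], the [j]-th summand being [tau] of [s] with its [j]-th letter
    replaced by the scalar [tau'] of that letter.  Every summand except the one
    at [v] still contains [v] as a factor, hence lies in the ideal [I] and is
    killed by [tau]; the summand at [v] is the right-hand side. *)
From HB Require Import structures.
From mathcomp Require Import all_boot all_order all_algebra.
From mathcomp Require Import reals complex.
Import Order.TTheory GRing.Theory Num.Theory.
Local Open Scope ring_scope.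

Lemma forall_mem_cat_cons (T : eqType) (P : T -> Prop) (s1 s2 : seq T) x :
  (forall p, p \in s1 ++ s2 -> P p) -> P x ->
  forall p, p \in s1 ++ x :: s2 -> P p.
Proof.
move=> Ps Px p; rewrite mem_cat in_cons => /or3P[ps1 | /eqP-> | ps2] //.
  by apply: Ps; rewrite mem_cat ps1.
by apply: Ps; rewrite mem_cat ps2 orbT.
Qed.

Lemma nth_mem_drop (T : eqType) (x0 : T) (s : seq T) j k :
  (j < k < size s)%N -> nth x0 s k \in drop j.+1 s.
Proof.
case/andP=> ltjk ltks; rewrite -(subnKC ltjk) -nth_drop mem_nth //.
by rewrite size_drop ltn_sub2r // (leq_ltn_trans _ ltks).
Qed.

Lemma nth_mem_take (T : eqType) (x0 : T) (s : seq T) j k :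
  (k < j)%N -> (k < size s)%N -> nth x0 s k \in take j s.
Proof.
by move=> ltkj ltks; rewrite -(nth_take _ ltkj) mem_nth // size_take; case: ifP.
Qed.

Section Lprod.
Context {C : fieldType} {A : algType C}.
Implicit Types (s : seq (bool * A)) (x : bool * A).

Lemma lprod_cat_cons s1 x s2 : lprod (s1 ++ x :: s2) = lprod s1 * x.2 * lprod s2.
Proof. by rewrite /lprod big_cat big_cons /= mulrA. Qed.

Context {I : {pred A}} (I_ideal : is_ideal I).

Lemma ideal_mull a y : y \in I -> a * y \in I.
Proof. by case: I_ideal => _ _ Imul /(Imul a)[]. Qed.

Lemma ideal_mulr a y : y \in I -> y * a \in I.
Proof. by case: I_ideal => _ _ Imul /(Imul a)[]. Qed.

Lemma lprod_ideal s x : x.2 \in I -> x \in s -> lprod s \in I.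
Proof.
move=> xI; elim: s => [|y s IHs] //.
rewrite in_cons /lprod big_cons => /orP[/eqP<- | xs].
  exact: ideal_mulr.
exact/ideal_mull/IHs.
Qed.

Lemma lprod_take_drop_ideal s k j (c : A) :
  (k < size s)%N -> (nth (true, 0) s k).2 \in I -> j != k ->
  lprod (take j s) * c * lprod (drop j.+1 s) \in I.
Proof.
move=> ltks skI; case: ltngtP => // [ltjk | ltkj] _.
  by apply/ideal_mull/(lprod_ideal _ _ skI)/nth_mem_drop; rewrite ltjk.
by apply/ideal_mulr/ideal_mulr/(lprod_ideal _ _ skI)/nth_mem_take.
Qed.

Context {tau tau' : A -> C} {Af : bool -> {pred A}}.
Hypotheses (Af_free : inf_free tau tau' Af) (I_ker : {in I, tau =1 fun=> 0}).

Lemma inf_free_ideal_letter s k :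
  alternating (map fst s) ->
  (forall p, p \in s -> p.2 \in Af p.1) ->
  (forall p, p \in s -> tau p.2 = 0) ->
  (k < size s)%N -> (nth (true, 0) s k).2 \in I ->
  tau' (lprod s) =
    tau (lprod (take k s) * (tau' (nth (true, 0) s k).2)%:A * lprod (drop k.+1 s)).
Proof.
move=> alt sAf stau ltks skI.
have s_nil : s != [::] by rewrite -size_eq0 -lt0n (leq_ltn_trans _ ltks).
have [_ ->] := Af_free _ s_nil alt sAf stau.
rewrite (bigD1 (Ordinal ltks)) //= big1 ?addr0 // => j neq_jk.
exact/I_ker/(lprod_take_drop_ideal _ _ _ _ ltks skI).
Qed.

End Lprod.

Theorem lemma2p5 (R : realType) (A : algType R[i])
  (tau tau' : A -> R[i])
  (tau_lin : forall (k : R[i]) (x y : A), tau (k *: x + y) = k * tau x + tau y)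
  (tau'_lin : forall (k : R[i]) (x y : A), tau' (k *: x + y) = k * tau' x + tau' y)
  (tau1 : tau 1 = 1) (tau'1 : tau' 1 = 0)
  (Af : bool -> {pred A})
  (Af_subalg : forall i, GRing.subalg_closed (Af i))
  (Af_free : inf_free tau tau' Af)
  (I : {pred A}) (I_ideal : is_ideal I)
  (I_ker : forall x, x \in I -> tau x = 0)
  (as_ bs : seq (bool * A)) (h : bool) (v : A) :
  alternating (map fst as_ ++ h :: map fst bs) ->
  (forall p, p \in as_ ++ bs -> p.2 \in Af p.1) ->
  (forall p, p \in as_ ++ bs -> tau p.2 = 0) ->
  v \in I -> v \in Af h ->
  tau' (lprod as_ * v * lprod bs) = tau (lprod as_ * (tau' v)%:A * lprod bs).
Proof.
move=> alt Af_letters tau_letters vI vAf.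
set s := as_ ++ (h, v) :: bs.
have nth_v : nth (true, 0) s (size as_) = (h, v) by rewrite nth_cat ltnn subnn.
have -> : lprod as_ * v * lprod bs = lprod s by rewrite lprod_cat_cons.
rewrite (inf_free_ideal_letter I_ideal Af_free I_ker s (size as_)).
- by rewrite nth_v /s take_size_cat // -cat_rcons drop_size_cat // size_rcons.
- by rewrite /s map_cat.
- exact: forall_mem_cat_cons.
- by apply: forall_mem_cat_cons => //; apply: I_ker.
- by rewrite /s size_cat /= addnS ltnS leq_addr.
- by rewrite nth_v.
Qed.
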